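(* Let $n\ge 2$, let $a_1,\dots,a_n$ be positive integers, let $b\ge 0$ be an integer, and let $M$ be the least common multiple of $a_1,\dots,a_n$. Let $b'=\lfloor b/M\rfloor$ and let $r$ be the remainder of $b$ modulo $M$ (so $0\le r<M$ and $b=b'M+r$). For an integer $c$, let $P'(c)$ denote the number of $n$-tuples $(t_1,\dots,t_n)$ of integers satisfying $$\sum_{j=1}^n a_jt_j=c,\qquad 0\le t_j\le \frac{M}{a_j}-1\quad (j=1,\dots,n),$$ and set $l_i=P'(r+(i-1)M)$ for $i=1,\dots,n$. Let $P(b)$ be the number of $n$-tuples $(x_1,\dots,x_n)$ of non-negative integers with $\sum_{i=1}^n a_ix_i=b$. Then $$P(b)=\sum_{i=1}^n l_i\, C(b'+2-i;\,n-1).$$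
   Context: For a real number $k$ and a non-negative integer $l$, define $C(k;l)=\frac{1}{l!}\,k(k+1)\cdots(k+l-1)$ if $k$ is a positive integer (natural number), and $C(k;l)=0$ otherwise (in particular $C(k;l)=0$ whenever $k$ is not an integer or $k\le 0$). *)

From mathcomp Require Import all_boot all_order all_algebra.
Set Implicit Arguments. Unset Strict Implicit. Unset Printing Implicit Defensive.
Import GRing.Theory Num.Theory.

(* C(k;l) = k(k+1)...(k+l-1)/l! for a positive integer k, and 0 otherwise.
   For k >= 1 this equals the binomial 'C(k+l-1, l). *)
Definition Cpoch (k : int) (l : nat) : nat :=
  match k with
  | Posz (S k') => \prod_(j < l) (k' + j).+1 %/ l`!
  | _ => 0
  end.

Definition lcm_seq n (a : 'I_n -> nat) : nat := \big[lcmn/1]_(i < n) a i.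

(* P'(c): number of tuples t with sum a_j t_j = c and 0 <= t_j <= M/a_j - 1.
   Coordinates are taken in 'I_M (t_j < M/a_j <= M, so no loss). *)
Definition Pprime n (a : 'I_n -> nat) (c : nat) : nat :=
  let M := lcm_seq a in
  #|[set t : {ffun 'I_n -> 'I_M} |
      [forall j, (t j : nat) < M %/ a j] &&
      (\sum_(j < n) a j * t j == c)]|.

(* P(b): number of tuples of nonnegative integers x with sum a_i x_i = b.
   Coordinates are taken in 'I_(b.+1): since a_i >= 1, any solution has x_i <= b. *)
Definition Pcount n (a : 'I_n -> nat) (b : nat) : nat :=
  #|[set x : {ffun 'I_n -> 'I_b.+1} | \sum_(i < n) a i * x i == b]|.

From mathcomp Require Import all_boot all_order all_algebra zify.
Set Implicit Arguments. Unset Strict Implicit. Unset Printing Implicit Defensive.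
Import Num.Theory.

(* Write each coordinate as x_j = t_j + (M / a_j) s_j with 0 <= t_j < M / a_j, so that
   sum_j a_j x_j = sum_j a_j t_j + M sum_j s_j.  For a fixed residue tuple t of weight
   c = sum_j a_j t_j, the equation forces c = b mod M, and the s are then the
   compositions of (b - c) / M into n parts, of which there are
   C((b - c)/M + n - 1, n - 1).
   Since c < n M, the weights c = b mod M are exactly r + (i - 1) M for 1 <= i <= n, and
   then (b - c) / M = b' + 1 - i, which gives the factor C(b' + 2 - i; n - 1); it vanishes
   precisely when no such s exists. *)

Lemma Cpoch_succ m l : Cpoch (Posz m.+1) l = 'C(m + l, l).
Proof.
rewrite /Cpoch bin_ffactd ffact_prod; congr (_ %/ _).
rewrite (reindex_inj rev_ord_inj) /=; apply: eq_bigr => i _.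
have := ltn_ord i; lia.
Qed.

Lemma Cpoch_le0 (k : int) l : (k <= 0)%R -> Cpoch k l = 0.
Proof. by case: k => [[|k]|k]. Qed.

Lemma Cpoch_shift B i l :
  Cpoch ((B + 2)%:Z - i.+1%:Z)%R l = if i <= B then 'C(B - i + l, l) else 0.
Proof.
case: leqP => iB.
  rewrite subzn; last by lia.
  have -> : B + 2 - i.+1 = (B - i).+1 by lia.
  by rewrite Cpoch_succ.
by rewrite Cpoch_le0 // subr_le0 lez_nat; lia.
Qed.

Lemma card_compositions m k K : k <= K ->
  #|[set s : {ffun 'I_m.+1 -> 'I_K.+1} | \sum_i (s i : nat) == k]| = 'C(m + k, m).
Proof.
rewrite -ltnS => kK; rewrite -card_ord_partitions.
pose h (t : m.+1.-tuple 'I_k.+1) := [ffun i => widen_ord kK (tnth t i)].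
have h_inj : injective h.
  move=> t1 t2 /ffunP eq_h; apply: eq_from_tnth => i.
  by apply: val_inj; have := eq_h i; rewrite !ffunE => /(congr1 val).
rewrite -(card_imset _ h_inj); apply: eq_card => s; rewrite inE.
apply/idP/imsetP => [/eqP sum_s | [t]].
  have s_le i : s i < k.+1 by rewrite ltnS -sum_s (bigD1 i) ?leq_addr.
  exists [tuple Ordinal (s_le i) | i < m.+1].
    by rewrite inE big_tuple; under eq_bigr do rewrite tnth_mktuple; rewrite sum_s.
  by apply/ffunP => i; apply: val_inj; rewrite ffunE tnth_mktuple.
by rewrite inE big_tuple => /eqP <- ->; under eq_bigr do rewrite ffunE.
Qed.

Lemma eqn_add_mul_mod M c b x : 0 < M -> c %% M = b %% M ->
  (c + M * x == b) = (c %/ M + x == b %/ M).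
Proof.
move=> M_gt0 eq_mod; rewrite -[RHS](eqn_pmul2r M_gt0).
have := divn_eq c M; have := divn_eq b M; rewrite eq_mod.
move: (c %/ M) (b %/ M) (b %% M) => q q' r -> ->.
by apply/eqP/eqP; lia.
Qed.

Lemma card_shifted_compositions m M b c : 0 < M ->
  #|[set s : {ffun 'I_m.+1 -> 'I_b.+1} | c + M * \sum_i (s i : nat) == b]| =
  (c %% M == b %% M) * Cpoch ((b %/ M + 2)%:Z - (c %/ M).+1%:Z)%R m.
Proof.
move=> M_gt0; case: eqP => [eq_mod | neq_mod]; rewrite ?(mul1n, mul0n); last first.
  apply/eqP; rewrite cards_eq0; apply/eqP/setP => s; rewrite !inE.
  apply/negP => /eqP eq_b; apply: neq_mod; by rewrite -eq_b addnC mulnC modnMDl.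
rewrite Cpoch_shift; under eq_finset do rewrite (eqn_add_mul_mod _ M_gt0 eq_mod).
case: leqP => [le_cb | lt_bc].
  under eq_finset do rewrite -(subnKC le_cb) eqn_add2l.
  rewrite addnC; apply: card_compositions.
  exact: leq_trans (leq_subr _ _) (leq_div _ _).
apply/eqP; rewrite cards_eq0; apply/eqP/setP => s; rewrite !inE.
by apply/negP => /eqP eq_b; move: lt_bc; rewrite -eq_b ltnNge leq_addr.
Qed.

Lemma sum_residue_class n M r c (F : nat -> nat) : r < M -> c %/ M < n ->
  \sum_(i < n) (c == r + i * M) * F i = (c %% M == r) * F (c %/ M).
Proof.
move=> lt_rM lt_cn; rewrite (bigD1 (Ordinal lt_cn)) //= big1 ?addn0 => [|i neq_i].
  by rewrite {1}(divn_eq c M) addnC eqn_add2r.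
case: eqP => [eq_c | _]; rewrite ?mul0n //; case/eqP: neq_i; apply: val_inj.
by rewrite /= eq_c addnC divnMDl ?divn_small ?addn0 // (leq_ltn_trans _ lt_rM).
Qed.

Section ResidueDecomposition.

Variables (n : nat) (a : 'I_n -> nat).
Hypothesis a_gt0 : forall i, 0 < a i.

Local Notation M := (lcm_seq a).
Local Notation d j := (M %/ a j).

Lemma dvdn_lcm_seq j : a j %| M.
Proof. exact: biglcmn_sup. Qed.

Lemma lcm_seq_gt0 : 0 < M.
Proof.
apply: (big_ind (fun m => 0 < m)) => // x y x_gt0 y_gt0.
by rewrite lcmn_gt0 x_gt0.
Qed.

Lemma cofactor_gt0 j : 0 < d j.
Proof. by rewrite divn_gt0 ?a_gt0 // dvdn_leq ?lcm_seq_gt0 ?dvdn_lcm_seq. Qed.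

Lemma sum_mul_cofactor (t s : 'I_n -> nat) :
  \sum_j a j * (t j + d j * s j) = \sum_j a j * t j + M * \sum_j s j.
Proof.
rewrite big_distrr -big_split; apply: eq_bigr => j _.
by rewrite mulnDr mulnA [a j * d j]mulnC divnK // dvdn_lcm_seq.
Qed.

Definition boxed (t : {ffun 'I_n -> 'I_M}) := [forall j, (t j : nat) < d j].

Lemma boxed_weight_lt t : 0 < n -> boxed t -> \sum_j a j * t j < n * M.
Proof.
move=> n_gt0 /forallP t_lt.
have term_lt j : a j * t j <= M.-1.
  rewrite -ltnS prednK ?lcm_seq_gt0 //.
  apply: (@leq_trans (a j * d j)); first by rewrite ltn_pmul2l.
  by rewrite mulnC divnK ?dvdn_lcm_seq.
apply: (@leq_ltn_trans (\sum_(j < n) M.-1)); first exact: leq_sum.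
by rewrite sum_nat_const card_ord ltn_pmul2l // prednK ?lcm_seq_gt0.
Qed.

Variable b : nat.

Lemma coord_le_weight (y : 'I_n -> nat) j : \sum_i a i * y i = b -> y j <= b.
Proof.
by move=> <-; rewrite (bigD1 j) //= (leq_trans _ (leq_addr _ _)) ?leq_pmull.
Qed.

Lemma residues_lt (x : {ffun 'I_n -> 'I_b.+1}) j : x j %% d j < M.
Proof. exact: leq_trans (ltn_pmod _ (cofactor_gt0 j)) (leq_div _ _). Qed.

Definition residues x : {ffun 'I_n -> 'I_M} :=
  [ffun j => Ordinal (residues_lt x j)].

Lemma quotients_lt (x : {ffun 'I_n -> 'I_b.+1}) j : x j %/ d j < b.+1.
Proof. exact: leq_ltn_trans (leq_div _ _) (ltn_ord (x j)). Qed.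

Definition quotients x : {ffun 'I_n -> 'I_b.+1} :=
  [ffun j => Ordinal (quotients_lt x j)].

Definition completions (t : {ffun 'I_n -> 'I_M}) :=
  [set s : {ffun 'I_n -> 'I_b.+1} | \sum_j a j * t j + M * \sum_j (s j : nat) == b].

Definition recompose (t : {ffun 'I_n -> 'I_M}) (s : {ffun 'I_n -> 'I_b.+1}) :
  {ffun 'I_n -> 'I_b.+1} := [ffun j => inord (t j + d j * s j)].

Lemma card_residue_fiber t : boxed t ->
  #|[set x : {ffun 'I_n -> 'I_b.+1} | (\sum_i a i * x i == b) && (residues x == t)]| =
  #|completions t|.
Proof.
move=> /forallP t_lt.
have recomposeE s : s \in completions t ->
    forall j, (recompose t s j : nat) = t j + d j * s j.
  rewrite inE => /eqP weight_s j; rewrite ffunE inordK // ltnS.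
  apply: (coord_le_weight (y := fun j => t j + d j * s j)).
  by rewrite sum_mul_cofactor.
have recompose_inj : {in completions t &, injective (recompose t)}.
  move=> s1 s2 /recomposeE s1E /recomposeE s2E eq_s.
  apply/ffunP => j; apply: val_inj; apply/eqP.
  rewrite -(eqn_pmul2l (cofactor_gt0 j)) -(eqn_add2l (t j)) -s1E -s2E.
  by rewrite eq_s.
rewrite -(card_in_imset recompose_inj); apply: eq_card => x; rewrite inE.
apply/andP/imsetP => [[/eqP weight_x /eqP res_x] | [s]].
  have xE j : (x j : nat) = t j + d j * quotients x j.
    by rewrite -res_x !ffunE /= addnC mulnC -divn_eq.
  have q_compl : quotients x \in completions t.
    rewrite inE -sum_mul_cofactor -[X in _ == X]weight_x.
    by apply/eqP/eq_bigr => j _; rewrite -xE.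
  exists (quotients x) => //.
  by apply/ffunP => j; apply: val_inj; rewrite /= recomposeE // -xE.
move=> s_compl ->; split; apply/eqP.
  have := s_compl; rewrite inE -sum_mul_cofactor => /eqP weight_s.
  by rewrite -[RHS]weight_s; apply: eq_bigr => j _; rewrite recomposeE.
apply/ffunP => j; apply: val_inj; rewrite ffunE /= recomposeE //.
by rewrite addnC mulnC modnMDl modn_small.
Qed.

Lemma Pcount_residues : Pcount a b = \sum_(t | boxed t) #|completions t|.
Proof.
rewrite /Pcount -sum1_card (partition_big residues boxed) => [|x _]; last first.
  by apply/forallP => j; rewrite ffunE /= ltn_pmod ?cofactor_gt0.
apply: eq_bigr => t boxed_t; rewrite -card_residue_fiber // -sum1_card.
by apply: eq_bigl => x; rewrite !inE.
Qed.

End ResidueDecomposition.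

Lemma Pprime_sum n (a : 'I_n -> nat) c :
  Pprime a c =
  \sum_(t : {ffun 'I_n -> 'I_(lcm_seq a)} | boxed t) (\sum_j a j * t j == c).
Proof.
rewrite /Pprime -sum1_card; under eq_bigl do rewrite inE.
by rewrite big_mkcondr; apply: eq_bigr => t _; case: eqP.
Qed.

Theorem mainTheorem3 (n : nat) (a : 'I_n -> nat) (b : nat) :
  2 <= n ->
  (forall i, 0 < a i) ->
  let M := lcm_seq a in
  let b' := b %/ M in
  let r := b %% M in
  Pcount a b =
  \sum_(i < n)
     Pprime a (r + i * M) *
     Cpoch ((b' + 2)%:Z - (i.+1)%:Z)%R (n - 1).
Proof.
move=> n_ge2 a_gt0; cbv zeta.
have M_gt0 := lcm_seq_gt0 a_gt0.
rewrite Pcount_residues //.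
under [RHS]eq_bigr do rewrite Pprime_sum big_distrl.
rewrite exchange_big /=; apply: eq_bigr => t boxed_t.
case: n a n_ge2 a_gt0 M_gt0 t boxed_t => [//|m] a _ a_gt0 M_gt0 t boxed_t.
rewrite subSS subn0 /completions card_shifted_compositions //.
rewrite (sum_residue_class (fun i => Cpoch ((b %/ lcm_seq a + 2)%:Z - i.+1%:Z)%R m)) //.
  by rewrite ltn_pmod.
by rewrite ltn_divLR // (boxed_weight_lt a_gt0).
Qed.
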